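(* Let $\Lambda$ be a row-finite $k$-graph such that the degree functor $d$ is $\mathbb{N}^k$-primitive for $\Lambda$. Then the system $(\Lambda,\mathbb{N}^k,d)$ is cofinal.
   Context: A $k$-graph is a countable category $\Lambda$ with a functor $d:\Lambda\to\mathbb{N}^k$ with unique factorisation; $\Lambda^n=d^{-1}(n)$, $\Lambda^0$ = vertices, $uXv=\{\lambda\in X:r(\lambda)=u,s(\lambda)=v\}$; row-finite: $v\Lambda^n$ finite. On $\mathbb{N}^k$, $h\ge_l g$ means $h-g\in\mathbb{N}^k$; $t$ is strictly positive if for every $s\in\mathbb{N}^k$ some multiple $nt\ge_l s$. $d$ is $\mathbb{N}^k$-primitive for $\Lambda$ if there is a strictly positive $t\in\mathbb{N}^k$ such that for all $v,w\in\Lambda^0$ and all $s\ge_l t$, $vd^{-1}(s)w=v\Lambda^sw\ne\emptyset$. The system $(\Lambda,\mathbb{N}^k,d)$ is cofinal if for all $v,w\in\Lambda^0$ and $a,b\in\mathbb{N}^k$ there is $N\in\mathbb{N}^k$ such that for every $\alpha\in w\Lambda^N$ there is $\beta\in v\Lambda s(\alpha)$ with $a+d(\beta)=b+d(\alpha)$. *)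

From HB Require Import structures.
From mathcomp Require Import all_boot.
Set Implicit Arguments. Unset Strict Implicit. Unset Printing Implicit Defensive.

Definition Nk (k : nat) := {ffun 'I_k -> nat}.
Definition nk0 (k : nat) : Nk k := [ffun => 0].
Definition nkadd (k : nat) (m n : Nk k) : Nk k := [ffun i => m i + n i].
Definition nkmul (k : nat) (c : nat) (t : Nk k) : Nk k := [ffun i => c * t i].
Definition nkge (k : nat) (h g : Nk k) : Prop := forall i, g i <= h i.

(* A k-graph: a countable category (vertices [V], morphisms [M], range [r],
   source [s], identities [idm], composition [comp f g] = "f g" defined when
   s f = r g) with a degree functor [d] into N^k with unique factorisation. *)
Record kgraph (k : nat) := KGraph {
  V : countType;
  M : countType;
  r : M -> V;
  s : M -> V;
  idm : V -> M;
  comp : M -> M -> M;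
  d : M -> Nk k;
  r_id : forall v, r (idm v) = v;
  s_id : forall v, s (idm v) = v;
  r_comp : forall f g, s f = r g -> r (comp f g) = r f;
  s_comp : forall f g, s f = r g -> s (comp f g) = s g;
  comp_idl : forall f, comp (idm (r f)) f = f;
  comp_idr : forall f, comp f (idm (s f)) = f;
  compA : forall f g h, s f = r g -> s g = r h ->
    comp f (comp g h) = comp (comp f g) h;
  d_id : forall v, d (idm v) = nk0 k;
  d_comp : forall f g, s f = r g -> d (comp f g) = nkadd (d f) (d g);
  unique_fact : forall (l : M) (m n : Nk k), d l = nkadd m n ->
    exists! p : M * M, [/\ d p.1 = m, d p.2 = n, s p.1 = r p.2 & l = comp p.1 p.2]
}.

Definition row_finite k (L : kgraph k) : Prop :=
  forall (v : V L) (n : Nk k), exists l : seq (M L),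
    forall x : M L, r x = v -> d x = n -> x \in l.

Definition strictly_positive k (t : Nk k) : Prop :=
  forall sv : Nk k, exists n : nat, nkge (nkmul n t) sv.

Definition primitive k (L : kgraph k) : Prop :=
  exists t : Nk k, strictly_positive t /\
    forall (v w : V L) (sv : Nk k), nkge sv t ->
      exists x : M L, [/\ r x = v, s x = w & d x = sv].

Definition cofinal k (L : kgraph k) : Prop :=
  forall (v w : V L) (a b : Nk k), exists N : Nk k,
    forall alpha : M L, r alpha = w -> d alpha = N ->
      exists beta : M L, [/\ r beta = v, s beta = s alpha &
        nkadd a (d beta) = nkadd b (d alpha)].

From mathcomp Require Import all_boot.

(* Take N := a + t, with t the primitivity degree.  For alpha in w Lambda^N,
   primitivity yields beta in v Lambda^(b + t) s(alpha), since b + t >= t, and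
   then a + d(beta) = a + b + t = b + d(alpha). *)

Lemma nkge_addl {k} (m n : Nk k) : nkge (nkadd m n) n.
Proof. by move=> i; rewrite ffunE leq_addl. Qed.

Lemma nkaddCA {k} (a b c : Nk k) : nkadd a (nkadd b c) = nkadd b (nkadd a c).
Proof. by apply/ffunP => i; rewrite !ffunE addnCA. Qed.

Theorem corollary5p10 (k : nat) (L : kgraph k) :
  row_finite L -> primitive L -> cofinal L.
Proof.
move=> _ [t [_ primt]] v w a b.
exists (nkadd a t) => alpha _ d_alpha.
have [beta [r_beta s_beta d_beta]] := primt v (s alpha) _ (nkge_addl b t).
by exists beta; rewrite d_beta d_alpha nkaddCA.
Qed.
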